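(* Let $k \geq 2$ and let $a_1,\ldots,a_k$ be integers, all nonzero and all of the same sign. Let $\mathit{min}_1,\ldots,\mathit{min}_k \in \mathbb{Z}$. Fix an integer $i$ with $1 \leq i < k$, and let $\mathit{max}_i \in \mathbb{Z}$ with $n_i := \mathit{max}_i - \mathit{min}_i > 0$. Let $X \subseteq \mathbb{Z}^k$ be a set such that every $(x_1,\ldots,x_k) \in X$ satisfies $\mathit{min}_j \leq x_j$ for all $1 \leq j \leq k$ and $x_i < \mathit{max}_i$. Suppose that for all $(x_1,\ldots,x_k) \in X$, $$\forall i' \in \mathbb{Z},\ 1 \leq i' < i \Rightarrow \sum_{j=1}^{i'} |a_j|\,(x_j - \mathit{min}_j) < |a_{i'+1}|,$$ and suppose that either $n_i \cdot a_i = a_{i+1}$ or $|a_i| \cdot n_i \leq |a_{i+1}|$. Then for all $(x_1,\ldots,x_k) \in X$, $$\sum_{j=1}^{i} |a_j|\,(x_j - \mathit{min}_j) < |a_{i+1}|.$$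
   Context: All quantities are integers; $|\cdot|$ denotes absolute value. *)

(* integers Z; vectors in Z^k are functions nat -> Z, indexed 1..k. *)
From Stdlib Require Import ZArith Lia.
Open Scope Z_scope.

Fixpoint wsum (a mn x : nat -> Z) (m : nat) : Z :=
  match m with
  | O => 0
  | S m' => wsum a mn x m' + Z.abs (a m) * (x m - mn m)
  end.

From Stdlib Require Import ZArith Lia.
Open Scope Z_scope.

(* The bound is the carry rule of a mixed-radix numeral: by hypothesis the
   first i-1 weighted digits stay below |a_i|, and the i-th digit is at most
   n_i - 1, so the first i weighted digits stay below
   |a_i| + |a_i| (n_i - 1) = |a_i| n_i <= |a_(i+1)|. *)

Lemma abs_mul_le_of_mul_eq (n p q : Z) :
  0 <= n -> n * p = q -> Z.abs p * n <= Z.abs q.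
Proof.
  intros Hn <-.
  rewrite Z.abs_mul, (Z.abs_eq n) by exact Hn.
  lia.
Qed.

Lemma wsum_succ_lt (a mn x : nat -> Z) (m : nat) (mx c : Z) :
  wsum a mn x m < Z.abs (a (S m)) ->
  mn (S m) <= x (S m) < mx ->
  Z.abs (a (S m)) * (mx - mn (S m)) <= c ->
  wsum a mn x (S m) < c.
Proof.
  intros Hprefix Hdigit Hc; simpl.
  assert (Hlast : Z.abs (a (S m)) * (x (S m) - mn (S m))
                  <= Z.abs (a (S m)) * (mx - mn (S m) - 1)).
  { apply Z.mul_le_mono_nonneg_l; lia. }
  lia.
Qed.

Theorem lemma1 (k : nat) (a mn : nat -> Z) (i : nat) (mx_i : Z)
    (X : (nat -> Z) -> Prop)
    (hk : (2 <= k)%nat)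
    (ha_nz : forall j, (1 <= j <= k)%nat -> a j <> 0)
    (ha_sign : (forall j, (1 <= j <= k)%nat -> 0 < a j) \/
               (forall j, (1 <= j <= k)%nat -> a j < 0))
    (hi : (1 <= i < k)%nat)
    (hn : mx_i - mn i > 0)
    (hX : forall x, X x ->
       (forall j, (1 <= j <= k)%nat -> mn j <= x j) /\ x i < mx_i)
    (hprev : forall x, X x ->
       forall i' : nat, (1 <= i' < i)%nat ->
         wsum a mn x i' < Z.abs (a (S i')))
    (hcase : (mx_i - mn i) * a i = a (S i) \/
             Z.abs (a i) * (mx_i - mn i) <= Z.abs (a (S i))) :
  forall x, X x -> wsum a mn x i < Z.abs (a (S i)).
Proof.
  intros x Hx.
  destruct (hX x Hx) as [Hmin Hlt].
  destruct i as [|m]; [lia|].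
  apply (wsum_succ_lt a mn x m mx_i).
  - destruct m as [|m].
    + pose proof (ha_nz 1%nat ltac:(lia)); simpl; lia.
    + apply (hprev x Hx); lia.
  - split; [apply Hmin; lia | exact Hlt].
  - destruct hcase as [Heq | Hle]; [|exact Hle].
    apply abs_mul_le_of_mul_eq; [lia | exact Heq].
Qed.
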